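(* Let $m>0$ and $a\neq 0$ be real parameters with $m^2\ge a^2$, and let $r_\pm=m\pm\sqrt{m^2-a^2}$. In cylindrical coordinates $(\rho,z)$ (with $\rho^2=x^2+y^2$) let $$r(\rho,z)=\sqrt{\frac{(R^2-a^2)+\sqrt{(R^2-a^2)^2+4a^2z^2}}{2}},\qquad R^2=\rho^2+z^2,$$ and let $$\Delta_1(\rho,z)=g^{11}g^{22}-(g^{12})^2=1-\frac{2mr^5\rho^2}{(r^4+a^2z^2)(r^2+a^2)^2}-\frac{2mrz^2}{r^4+a^2z^2},$$ where $$g^{11}=-1+\frac{2mr^5\rho^2}{(r^4+a^2z^2)(r^2+a^2)^2},\quad g^{22}=-1+\frac{2mrz^2}{r^4+a^2z^2},\quad g^{12}=\frac{2mr^3z\rho}{(r^4+a^2z^2)(r^2+a^2)}$$ are components of the inverse Kerr metric tensor. Then, at points where $\Delta_1$ is defined, the equation $\Delta_1(\rho,z)=0$ holds if and only if $r-r_+=0$ or $r-r_-=0$.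
   Context: The Kerr metric in Kerr–Schild coordinates is $ds^2=dt^2-dx^2-dy^2-dz^2-\frac{2mr^3}{r^4+a^2z^2}\big[dt+\frac{r(x\,dx+y\,dy)}{r^2+a^2}+\frac{a(y\,dx-x\,dy)}{r^2+a^2}+\frac{z}{r}dz\big]^2$. In cylindrical coordinates $(y_0,y_1,y_2,y_3)=(t,\rho,z,\varphi)$ its inverse tensor is $g^{jk}=\xi^{jk}+\frac{2mr^3}{r^4+a^2z^2}m^jm^k$, where $\xi^{jk}$ is diagonal with $\xi^{00}=1,\ \xi^{11}=\xi^{22}=-1,\ \xi^{33}=-1/\rho^2$, and $(m^0,m^1,m^2,m^3)=\big(-1,\frac{r\rho}{r^2+a^2},\frac{z}{r},\frac{-a}{r^2+a^2}\big)$. The curve $\Delta_1=0$ is called the restricted ergosphere. *)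

From Stdlib Require Import Reals.
Open Scope R_scope.

Definition kerr_r (a rho z : R) : R :=
  let R2 := rho ^ 2 + z ^ 2 in
  sqrt (((R2 - a ^ 2) + sqrt ((R2 - a ^ 2) ^ 2 + 4 * a ^ 2 * z ^ 2)) / 2).

Definition g11 (m a rho z : R) : R :=
  let r := kerr_r a rho z in
  -1 + 2 * m * r ^ 5 * rho ^ 2 / ((r ^ 4 + a ^ 2 * z ^ 2) * (r ^ 2 + a ^ 2) ^ 2).

Definition g22 (m a rho z : R) : R :=
  let r := kerr_r a rho z in
  -1 + 2 * m * r * z ^ 2 / (r ^ 4 + a ^ 2 * z ^ 2).

Definition g12 (m a rho z : R) : R :=
  let r := kerr_r a rho z in
  2 * m * r ^ 3 * z * rho / ((r ^ 4 + a ^ 2 * z ^ 2) * (r ^ 2 + a ^ 2)).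

Definition Delta1 (m a rho z : R) : R :=
  g11 m a rho z * g22 m a rho z - (g12 m a rho z) ^ 2.

Definition r_plus (m a : R) : R := m + sqrt (m ^ 2 - a ^ 2).
Definition r_minus (m a : R) : R := m - sqrt (m ^ 2 - a ^ 2).

(* The radius r(rho, z) is the nonnegative root of the biquadratic
   r^4 - (R^2 - a^2) r^2 - a^2 z^2 = 0.  Modulo this relation the determinant
   Delta_1 collapses to (r^2 + a^2 - 2 m r) / (r^2 + a^2), whose numerator
   factors as (r - r_+) (r - r_-) once m^2 >= a^2. *)
From Stdlib Require Import Reals Lra Psatz.
Open Scope R_scope.

Lemma sqrt_biquadratic_root (b c : R) (hc : 0 <= c) :
  let t := sqrt ((b + sqrt (b ^ 2 + 4 * c)) / 2) in
  t ^ 4 - b * t ^ 2 - c = 0.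
Proof.
  intro t.
  set (s := sqrt (b ^ 2 + 4 * c)).
  assert (hs2 : s ^ 2 = b ^ 2 + 4 * c) by (apply pow2_sqrt; nra).
  assert (hs0 : 0 <= s) by apply sqrt_pos.
  assert (hbs : 0 <= (b + s) / 2) by nra.
  assert (ht2 : t ^ 2 = (b + s) / 2) by (unfold t; apply pow2_sqrt; exact hbs).
  replace (t ^ 4) with ((t ^ 2) ^ 2) by ring.
  rewrite ht2; nra.
Qed.

Lemma kerr_r_quartic (a rho z : R) :
  let r := kerr_r a rho z in
  r ^ 4 - (rho ^ 2 + z ^ 2 - a ^ 2) * r ^ 2 - a ^ 2 * z ^ 2 = 0.
Proof.
  unfold kerr_r; cbv zeta.
  replace (4 * a ^ 2 * z ^ 2) with (4 * (a ^ 2 * z ^ 2)) by ring.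
  apply sqrt_biquadratic_root; nra.
Qed.

Lemma inverse_kerr_det_identity (m a rho z r : R)
  (h1 : r ^ 4 + a ^ 2 * z ^ 2 <> 0) (h2 : r ^ 2 + a ^ 2 <> 0) :
  (-1 + 2 * m * r ^ 5 * rho ^ 2 / ((r ^ 4 + a ^ 2 * z ^ 2) * (r ^ 2 + a ^ 2) ^ 2)) *
  (-1 + 2 * m * r * z ^ 2 / (r ^ 4 + a ^ 2 * z ^ 2)) -
  (2 * m * r ^ 3 * z * rho / ((r ^ 4 + a ^ 2 * z ^ 2) * (r ^ 2 + a ^ 2))) ^ 2
  = (r ^ 2 + a ^ 2 - 2 * m * r) / (r ^ 2 + a ^ 2)
    + 2 * m * r ^ 3 * (r ^ 4 - (rho ^ 2 + z ^ 2 - a ^ 2) * r ^ 2 - a ^ 2 * z ^ 2)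
      / ((r ^ 4 + a ^ 2 * z ^ 2) * (r ^ 2 + a ^ 2) ^ 2).
Proof.
  field; repeat split; auto.
  replace ((a * z) ^ 2) with (a ^ 2 * z ^ 2) by ring; exact h1.
Qed.

Lemma Delta1_kerr (m a rho z : R)
  (h1 : kerr_r a rho z ^ 4 + a ^ 2 * z ^ 2 <> 0)
  (h2 : kerr_r a rho z ^ 2 + a ^ 2 <> 0) :
  let r := kerr_r a rho z in
  Delta1 m a rho z = (r ^ 2 + a ^ 2 - 2 * m * r) / (r ^ 2 + a ^ 2).
Proof.
  unfold Delta1, g11, g22, g12; cbv zeta.
  rewrite inverse_kerr_det_identity by assumption.
  rewrite (kerr_r_quartic a rho z).
  unfold Rdiv; ring.
Qed.

Lemma horizon_factorization (m a r : R) (hma : a ^ 2 <= m ^ 2) :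
  r ^ 2 + a ^ 2 - 2 * m * r = (r - r_plus m a) * (r - r_minus m a).
Proof.
  unfold r_plus, r_minus.
  assert (hq : sqrt (m ^ 2 - a ^ 2) ^ 2 = m ^ 2 - a ^ 2) by (apply pow2_sqrt; lra).
  nra.
Qed.

Theorem proposition2p1 (m a rho z : R)
  (hm : 0 < m) (ha : a <> 0) (hma : a ^ 2 <= m ^ 2) (hrho : 0 <= rho)
  (hdef1 : (kerr_r a rho z) ^ 4 + a ^ 2 * z ^ 2 <> 0)
  (hdef2 : (kerr_r a rho z) ^ 2 + a ^ 2 <> 0) :
  Delta1 m a rho z = 0 <->
  (kerr_r a rho z - r_plus m a = 0 \/ kerr_r a rho z - r_minus m a = 0).
Proof.
  rewrite (Delta1_kerr m a rho z hdef1 hdef2).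
  set (r := kerr_r a rho z) in *.
  rewrite (horizon_factorization m a r hma).
  split.
  - intro h.
    apply Rmult_integral.
    apply (Rmult_eq_reg_r (/ (r ^ 2 + a ^ 2))); [lra | apply Rinv_neq_0_compat, hdef2].
  - intros [h | h]; rewrite h; unfold Rdiv; ring.
Qed.
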